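(* Let $V$ be an $n$-parameter persistence module such that for every $\varepsilon>0$ there is a q-tame module $W$ and morphisms $a:V\to W$, $b:W\to V[\varepsilon]$ with $b\circ a=\eta^V_\varepsilon$. Then $V$ is q-tame.
   Context: Fix a field $\mathbb{k}$. An $n$-parameter persistence module is a functor $V:\mathbf{R}^n\to\mathbf{Vect}_{\mathbb{k}}$ ($\mathbf{R}^n$ with componentwise order), structure maps $V_{s,t}$. Write $s\ll t$ if $s_i<t_i$ for all $i$; $s+\varepsilon$ adds $\varepsilon$ to each coordinate. $V$ is q-tame if $V_{s,t}$ has finite rank whenever $s\ll t$. $V[\varepsilon]_s=V_{s+\varepsilon}$, and $\eta^V_\varepsilon:V\to V[\varepsilon]$ is the morphism given by the structure maps $V_{s,s+\varepsilon}$. *)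

From HB Require Import structures.
From mathcomp Require Import all_boot all_order all_algebra.
From mathcomp Require Import reals.
Set Implicit Arguments. Unset Strict Implicit. Unset Printing Implicit Defensive.
Import Order.TTheory GRing.Theory Num.Theory.
Local Open Scope ring_scope.

Section PersMod.
Variables (k : fieldType) (R : realType) (n : nat).

Definition pt := 'I_n -> R.

Definition lept (s t : pt) : bool := [forall i, s i <= t i].
Definition llt (s t : pt) : bool := [forall i, s i < t i].
Definition shift_pt (e : R) (s : pt) : pt := fun i => s i + e.

Lemma lept_shift (e : R) (s t : pt) : lept s t -> lept (shift_pt e s) (shift_pt e t).
Proof.
move=> /forallP h; apply/forallP => i; rewrite /shift_pt lerD2r; exact: h.
Qed.

Definition is_linear (U W : lmodType k) (f : U -> W) : Prop :=
  forall (a : k) (x y : U), f (a *: x + y) = a *: f x + f y.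

Definition finite_rank (U W : lmodType k) (f : U -> W) : Prop :=
  exists r : seq W, forall x : U,
    exists c : 'I_(size r) -> k, f x = \sum_(i < size r) c i *: r`_i.

Record pmod := PMod {
  pm_obj : pt -> lmodType k;
  pm_map : forall s t : pt, lept s t -> pm_obj s -> pm_obj t;
  pm_lin : forall s t (h : lept s t), is_linear (pm_map h);
  pm_id : forall s (h : lept s s) x, pm_map h x = x;
  pm_comp : forall s t u (h1 : lept s t) (h2 : lept t u) (h3 : lept s u) x,
      pm_map h3 x = pm_map h2 (pm_map h1 x)
}.
Arguments pm_obj : clear implicits.
Arguments pm_map p {s t} _ _.

Definition shift_map (V : pmod) (e : R) (s t : pt) (h : lept s t) :
  pm_obj V (shift_pt e s) -> pm_obj V (shift_pt e t) :=
  pm_map V (lept_shift e h).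
Arguments shift_map V e {s t} h _.

Lemma shift_lin (V : pmod) e s t (h : lept s t) : is_linear (shift_map V e h).
Proof. exact: pm_lin. Qed.
Lemma shift_id (V : pmod) e s (h : lept s s) x : shift_map V e h x = x.
Proof. exact: pm_id. Qed.
Lemma shift_comp (V : pmod) e s t u (h1 : lept s t) (h2 : lept t u) (h3 : lept s u) x :
  shift_map V e h3 x = shift_map V e h2 (shift_map V e h1 x).
Proof. exact: pm_comp. Qed.

Definition shift_mod (V : pmod) (e : R) : pmod :=
  @PMod (fun s => pm_obj V (shift_pt e s)) (@shift_map V e)
    (@shift_lin V e) (@shift_id V e) (@shift_comp V e).

Definition pmorph (V W : pmod) (f : forall s, pm_obj V s -> pm_obj W s) : Prop :=
  (forall s, is_linear (f s)) /\
  (forall s t (h : lept s t) x, f t (pm_map V h x) = pm_map W h (f s x)).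

Definition qtame (V : pmod) : Prop :=
  forall s t (h : lept s t), llt s t -> finite_rank (pm_map V h).

End PersMod.
Arguments pm_obj {k R n} p _.
Arguments pm_map {k R n} p {s t} _ _.

From HB Require Import structures.
From mathcomp Require Import all_boot all_order all_algebra.
From mathcomp Require Import reals.
From mathcomp Require Import lra.
Import Order.TTheory GRing.Theory Num.Theory.
Local Open Scope ring_scope.

(* Given s << t, pick eps > 0 with s + 2 eps <= t and put s' = s + eps.  By
   naturality of a and b \o a = eta_eps, the map V_{s,t} factors as
   V_{s'+eps,t} \o b_{s'} \o W_{s,s'} \o a_s, and W_{s,s'} has finite rank
   because s << s' and W is q-tame. *)

Section FiniteRank.
Context {k : fieldType}.

Lemma is_linear0 {U W : lmodType k} {f : U -> W} : is_linear f -> f 0 = 0.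
Proof.
move=> f_lin; have := f_lin 1 0 0; rewrite !scale1r addr0 => f00.
by apply: (@addrI _ (f 0)); rewrite addr0 -f00.
Qed.

Lemma is_linearD {U W : lmodType k} {f : U -> W} x y :
  is_linear f -> f (x + y) = f x + f y.
Proof. by move=> f_lin; rewrite -{1}[x]scale1r f_lin scale1r. Qed.

Lemma is_linearZ {U W : lmodType k} {f : U -> W} c x :
  is_linear f -> f (c *: x) = c *: f x.
Proof. by move=> f_lin; rewrite -[c *: x]addr0 f_lin is_linear0 // addr0. Qed.

Lemma is_linear_comp {U W X : lmodType k} {f : U -> W} {g : W -> X} :
  is_linear f -> is_linear g -> is_linear (g \o f).
Proof. by move=> f_lin g_lin c x y /=; rewrite f_lin g_lin. Qed.

Lemma finite_rank_eq {U W : lmodType k} {f g : U -> W} :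
  f =1 g -> finite_rank g -> finite_rank f.
Proof. by move=> fg [r g_span]; exists r => x; rewrite fg; exact: g_span. Qed.

Lemma finite_rank_comp_r {T U W : lmodType k} {f : U -> W} (h : T -> U) :
  finite_rank f -> finite_rank (f \o h).
Proof. by move=> [r f_span]; exists r => x; exact: f_span. Qed.

Lemma finite_rank_comp_l {U W X : lmodType k} {f : U -> W} {g : W -> X} :
  is_linear g -> finite_rank f -> finite_rank (g \o f).
Proof.
move=> g_lin [r f_span]; exists (map g r) => x /=.
have [c ->] := f_span x; rewrite size_map; exists c.
apply: (big_rec2 (fun y z => g y = z)); first exact: is_linear0.
move=> i y _ _ <-; rewrite is_linearD // is_linearZ //.
by rewrite (nth_map 0) // ltn_ord.
Qed.

End FiniteRank.

Section Points.
Context {R : realType} {n : nat}.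

Lemma lept_trans {s t u : pt R n} : lept s t -> lept t u -> lept s u.
Proof.
move=> /forallP s_le_t /forallP t_le_u; apply/forallP => i.
exact: le_trans (s_le_t i) (t_le_u i).
Qed.

Lemma llt_lept {s t : pt R n} : llt s t -> lept s t.
Proof. by move=> /forallP s_lt_t; apply/forallP => i; exact: ltW. Qed.

Lemma lept_shift_pt (e : R) (s : pt R n) : 0 <= e -> lept s (shift_pt e s).
Proof. by move=> e_ge0; apply/forallP => i; rewrite /shift_pt lerDl. Qed.

Lemma llt_shift_pt (e : R) (s : pt R n) : 0 < e -> llt s (shift_pt e s).
Proof. by move=> e_gt0; apply/forallP => i; rewrite /shift_pt ltrDl. Qed.

Lemma llt_gap {s t : pt R n} :
  llt s t -> exists2 e : R, 0 < e & forall i, s i + e <= t i.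
Proof.
move=> /forallP s_lt_t; exists (\big[Order.min/1]_i (t i - s i)).
  by apply/bigmin_gtP; split => // i _; rewrite subr_gt0.
by move=> i; rewrite -lerBrDl bigmin_le.
Qed.

End Points.

Section Interleaving.
Context {k : fieldType} {R : realType} {n : nat} {V W : pmod k R n} {eps : R}.
Context {a : forall s, pm_obj V s -> pm_obj W s}
        {b : forall s, pm_obj W s -> pm_obj (shift_mod V eps) s}.
Hypotheses (eps_ge0 : 0 <= eps) (a_morph : pmorph a) (b_morph : pmorph b)
  (ba_eta : forall s (h : lept s (shift_pt eps s)) x, b s (a s x) = pm_map V h x).

Lemma pm_map_factor {s s' t} (h : lept s t) (hW : lept s s')
    (hV : lept (shift_pt eps s') t) :
  pm_map V h =1 (pm_map V hV \o b s') \o (pm_map W hW \o a s).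
Proof.
move=> x /=.
have s'_le : lept s' (shift_pt eps s') by exact: lept_shift_pt.
have s_le : lept s (shift_pt eps s') by exact: (lept_trans hW s'_le).
by rewrite -a_morph.2 (ba_eta _ s'_le) -(pm_comp hW s'_le s_le) (pm_comp s_le hV h).
Qed.

Lemma interleaved_finite_rank {s s' t} (h : lept s t) :
  qtame W -> llt s s' -> lept (shift_pt eps s') t -> finite_rank (pm_map V h).
Proof.
move=> W_qtame s_llt_s' hV; have hW : lept s s' := llt_lept s_llt_s'.
apply: (finite_rank_eq (pm_map_factor h hW hV)).
apply: finite_rank_comp_l.
  by apply: is_linear_comp; [exact: b_morph.1 | exact: pm_lin].
exact/finite_rank_comp_r/W_qtame.
Qed.

End Interleaving.

Theorem lemma4p3 (k : fieldType) (R : realType) (n : nat) (V : pmod k R n) :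
  (forall eps : R, 0 < eps ->
     exists (W : pmod k R n)
            (a : forall s, pm_obj V s -> pm_obj W s)
            (b : forall s, pm_obj W s -> pm_obj (shift_mod V eps) s),
       [/\ qtame W, pmorph a, pmorph b &
           forall s (h : lept s (shift_pt eps s)) x, b s (a s x) = pm_map V h x]) ->
  qtame V.
Proof.
move=> interleaved s t h s_llt_t.
have [e e_gt0 gap] := llt_gap s_llt_t.
have eps_gt0 : 0 < e / 2 by lra.
have [W [a [b [W_qtame a_morph b_morph ba_eta]]]] := interleaved _ eps_gt0.
apply: (interleaved_finite_rank (s' := shift_pt (e / 2) s) (ltW eps_gt0)
          a_morph b_morph ba_eta h W_qtame).
  exact: llt_shift_pt.
by apply/forallP => i; rewrite /shift_pt; have := gap i; lra.
Qed.
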